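(* Let $G=(V,E)$ be a finite simple undirected graph with $|V|=n\ge 1$ and adjacency matrix $A$. Let $\lambda_1\ge\dots\ge\lambda_n$ be the eigenvalues of $A$ (listed with multiplicity), fix an orthonormal basis of $\mathbb{R}^n$ consisting of eigenvectors of $A$ (the $j$-th eigenvector having eigenvalue $\lambda_j$), and let $\mu_1,\dots,\mu_n$ be the coordinates of the all-ones vector $\mathbf{1}_n$ with respect to this basis. Let $k\ge 1$ and let $$f(\mathbf{x})=\sum_{\alpha\in\mathbb{N}^k} c_\alpha\, x_1^{\alpha_1}\cdots x_k^{\alpha_k}\in\mathbb{R}[x_1,\dots,x_k],$$ with $c_\alpha\in\mathbb{R}$ and $c_\alpha=0$ for all but finitely many $\alpha$. Then there are numbers $\gamma(i_1,\dots,i_k)>0$ such that $$\sum_{\alpha\in\mathbb{N}^k} c_\alpha\, w_{\alpha_1}\cdots w_{\alpha_k}=\sum_{1\le i_1\le\dots\le i_k\le n}\gamma(i_1,\dots,i_k)\, f_{\mathrm{sym}}(\lambda_{i_1},\dots,\lambda_{i_k})\,\mu_{i_1}^2\cdots\mu_{i_k}^2 .$$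
   Context: $\mathbb{N}$ denotes the nonnegative integers. For $j\in\mathbb{N}$, $w_j=w_j(G)$ denotes the total number of walks of length $j$ in $G$ (a walk is a sequence of vertices in which consecutive vertices are adjacent; vertices and edges may repeat; the length is the number of edges), so $w_0=n$ and $w_j=\mathbf{1}_n^T A^j\mathbf{1}_n$. For a polynomial $f\in\mathbb{R}[x_1,\dots,x_k]$, its symmetrization is $f_{\mathrm{sym}}(\mathbf{x})=\sum_{\sigma\in S_k} f(x_{\sigma(1)},\dots,x_{\sigma(k)})$. *)

From HB Require Import structures.
From mathcomp Require Import all_boot all_order all_algebra all_fingroup.
From mathcomp Require Export mpoly.
Set Implicit Arguments. Unset Strict Implicit. Unset Printing Implicit Defensive.
Import Order.TTheory GRing.Theory Num.Theory.
Local Open Scope ring_scope.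

Definition adjmx (R : nzRingType) (n : nat) (e : rel 'I_n) : 'M[R]_n :=
  \matrix_(i, j) (e i j)%:R.

(* w_j = 1^T A^j 1 : total number of walks of length j *)
Definition walks (R : nzRingType) (n : nat) (e : rel 'I_n) (j : nat) : R :=
  \sum_(u < n) \sum_(v < n) ((adjmx R e) ^+ j) u v.

Definition sympoly_eval (R : comNzRingType) (k : nat) (f : {mpoly R[k]}) (x : 'I_k -> R) : R :=
  \sum_(s : 'S_k) f.@[fun i => x (s i)].

Definition walk_eval (R : comNzRingType) (n k : nat) (e : rel 'I_n) (f : {mpoly R[k]}) : R :=
  \sum_(m <- msupp f) f@_m * \prod_(i < k) walks R e (m i).

From HB Require Import structures.
From mathcomp Require Import all_boot all_order all_algebra all_fingroup.
From mathcomp Require Import mpoly.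
Set Implicit Arguments. Unset Strict Implicit. Unset Printing Implicit Defensive.
Import Order.TTheory GRing.Theory Num.Theory.
Local Open Scope ring_scope.

(* Expanding the all-ones vector in the orthonormal eigenbasis gives
   w_j = sum_i mu_i^2 lambda_i^j.  Substituting this into
   sum_alpha c_alpha w_(alpha_1) ... w_(alpha_k) and multiplying out yields a sum,
   over all maps t : [k] -> [n], of prod_a mu_(t a)^2 * f(lambda_(t 1), ..., lambda_(t k)).
   Averaging over the action of S_k on the maps t and grouping them by their
   nondecreasing rearrangement s turns the orbit of s into
   gamma(s) f_sym(lambda o s) prod_a mu_(s a)^2, with gamma(s) = #{t | sort t = s} / k!. *)

Definition ffun_perm (T : Type) k (t : {ffun 'I_k -> T}) (p : 'S_k) : {ffun 'I_k -> T} :=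
  [ffun a => t (p a)].

Lemma ffun_perm_inj (T : Type) k (p : 'S_k) : injective (@ffun_perm T k ^~ p).
Proof.
move=> t1 t2 /ffunP eq12; apply/ffunP => a.
by have := eq12 ((p^-1)%g a); rewrite !ffunE permKV.
Qed.

Lemma ffun_permM (T : Type) k (t : {ffun 'I_k -> T}) (p q : 'S_k) :
  ffun_perm (ffun_perm t q) p = ffun_perm t (p * q)%g.
Proof. by apply/ffunP => a; rewrite !ffunE permM. Qed.

Section SortFfun.
Variables n k : nat.
Implicit Types t s : {ffun 'I_k -> 'I_n}.

Definition ffun_sorted t :=
  [forall a : 'I_k, forall b : 'I_k, (a <= b)%N ==> (t a <= t b)%N].

Definition sort_ffun t : {ffun 'I_k -> 'I_n} :=
  [ffun a => tnth (sort_tuple <=%O [tuple t a | a < k]) a].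

Lemma ffun_sortedE t : ffun_sorted t = sorted <=%O [tuple t a | a < k].
Proof.
apply/idP/idP => [t_sorted | /le_sorted_leq_nth t_sorted].
  have [k0|k_gt0] := posnP k; first by move: [tuple t a | a < k]; rewrite k0 => u; rewrite tuple0.
  apply/(sortedP (t (Ordinal k_gt0))) => i; rewrite size_tuple => lt_ik.
  have lt_ik' : (i < k)%N by apply: ltnW.
  rewrite -[i]/(nat_of_ord (Ordinal lt_ik')) -[i.+1]/(nat_of_ord (Ordinal lt_ik)).
  rewrite !nth_mktuple leEord.
  exact: (implyP (forallP (forallP t_sorted (Ordinal lt_ik')) (Ordinal lt_ik))).
apply/forallP => a; apply/forallP => b; apply/implyP => le_ab.
have := t_sorted (t a) a b; rewrite !inE size_tuple !ltn_ord !nth_mktuple leEord.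
exact.
Qed.

Lemma sort_ffun_tuple t : [tuple sort_ffun t a | a < k] = sort_tuple <=%O [tuple t a | a < k].
Proof. by apply: eq_from_tnth => a; rewrite tnth_mktuple ffunE. Qed.

Lemma sort_ffun_sorted t : ffun_sorted (sort_ffun t).
Proof. by rewrite ffun_sortedE sort_ffun_tuple sort_le_sorted. Qed.

Lemma sort_ffun_id s : ffun_sorted s -> sort_ffun s = s.
Proof.
rewrite ffun_sortedE => /sort_le_id s_sorted.
apply/ffunP => a; rewrite ffunE.
have -> : sort_tuple <=%O [tuple s a | a < k] = [tuple s a | a < k] by exact: val_inj.
by rewrite tnth_mktuple.
Qed.

Lemma sort_ffun_perm t : exists p : 'S_k, t = ffun_perm (sort_ffun t) p.
Proof.
have /tuple_permP[p tE] : perm_eq [tuple t a | a < k] (sort_tuple <=%O [tuple t a | a < k]).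
  by rewrite perm_sym perm_sort.
exists p; apply/ffunP => a.
have /(congr1 (fun u : k.-tuple 'I_n => tnth u a)) := val_inj tE.
by rewrite !tnth_mktuple !ffunE.
Qed.

End SortFfun.

Lemma sum_ffun_perm (T : finType) (V : nmodType) k (F : {ffun 'I_k -> T} -> V) :
  \sum_t \sum_(p : 'S_k) F (ffun_perm t p) = (\sum_t F t) *+ k`!.
Proof.
rewrite exchange_big /= (eq_bigr (fun=> \sum_t F t)) => [|p _]; last first.
  by rewrite [RHS](reindex_inj (@ffun_perm_inj T k p)).
by rewrite sumr_const card_Sn.
Qed.

Lemma sum_perm_ffun_perm (T : finType) (V : nmodType) k (F : {ffun 'I_k -> T} -> V)
    (t : {ffun 'I_k -> T}) (q : 'S_k) :
  \sum_(p : 'S_k) F (ffun_perm (ffun_perm t q) p) = \sum_(p : 'S_k) F (ffun_perm t p).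
Proof.
rewrite [RHS](reindex_inj (mulIg q)) /=.
by apply: eq_bigr => p _; rewrite ffun_permM.
Qed.

Lemma sum_ffun_sorted_orbits (R : numFieldType) n k (F : {ffun 'I_k -> 'I_n} -> R) :
  exists2 gamma : {ffun 'I_k -> 'I_n} -> R,
    forall s, ffun_sorted s -> 0 < gamma s &
    \sum_t F t = \sum_(s | ffun_sorted s) gamma s * \sum_(p : 'S_k) F (ffun_perm s p).
Proof.
pose orbit_sum t := \sum_(p : 'S_k) F (ffun_perm t p).
pose gamma (s : {ffun 'I_k -> 'I_n}) : R := #|[pred t | sort_ffun t == s]|%:R / k`!%:R.
have fact_neq0 : k`!%:R != 0 :> R by rewrite pnatr_eq0 -lt0n fact_gt0.
exists gamma => [s s_sorted|].
  rewrite divr_gt0 ?ltr0n ?fact_gt0 //; apply/card_gt0P.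
  by exists s; rewrite inE sort_ffun_id.
have -> : \sum_t F t = (\sum_t orbit_sum t) / k`!%:R.
  by rewrite /orbit_sum sum_ffun_perm -[X in X / _]mulr_natr mulfK.
rewrite mulr_suml (partition_big (@sort_ffun n k) (@ffun_sorted n k)) /=; last first.
  by move=> t _; exact: sort_ffun_sorted.
apply: eq_bigr => s _; rewrite -mulr_suml (eq_bigr (fun=> orbit_sum s)); last first.
  move=> t /eqP <-; have [p {1}->] := sort_ffun_perm t.
  exact: sum_perm_ffun_perm.
by rewrite sumr_const /gamma mulrAC mulr_natl.
Qed.

Section SpectralWalks.
Variables (R : comNzRingType) (n : nat) (A P : 'M[R]_n) (lambda mu : 'I_n -> R).
Hypothesis P_orth : P^T *m P = 1%:M.
Hypothesis P_eig : forall j, A *m col j P = lambda j *: col j P.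
Hypothesis mu_coord : const_mx 1 = \sum_j mu j *: col j P.

Lemma mulmx_eigen_diag : A *m P = P *m diag_mx (\row_i lambda i).
Proof.
apply/matrixP => u v; rewrite mul_mx_diag !mxE mulrC.
have /matrixP/(_ u 0) := P_eig v; rewrite !mxE => <-.
by apply: eq_bigr => w _; rewrite !mxE.
Qed.

Lemma mulmx_eigen_diagX j : A ^+ j *m P = P *m diag_mx (\row_i lambda i ^+ j).
Proof.
elim: j => [|j IHj].
  by apply/matrixP => u v; rewrite mul1mx mul_mx_diag !mxE mulr1.
rewrite exprS -mulmxE -mulmxA IHj mulmxA mulmx_eigen_diag -mulmxA mulmx_diag.
by congr (_ *m diag_mx _); apply/rowP => i; rewrite !mxE exprS.
Qed.

Lemma sum_entries_mxX_eigen j : \sum_u \sum_v (A ^+ j) u v = \sum_i mu i ^+ 2 * lambda i ^+ j.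
Proof.
pose m := \col_i mu i; pose ones : 'cV[R]_n := const_mx 1.
have onesE : ones = P *m m.
  rewrite /ones mu_coord; apply/matrixP => u z; rewrite summxE !mxE.
  by apply: eq_bigr => i _; rewrite !mxE mulrC.
have -> : \sum_u \sum_v (A ^+ j) u v = (ones^T *m (A ^+ j *m ones)) 0 0.
  rewrite /ones mxE; apply: eq_bigr => u _; rewrite !mxE mul1r.
  by apply: eq_bigr => v _; rewrite mxE mulr1.
rewrite onesE trmx_mul (mulmxA (A ^+ j)) mulmx_eigen_diagX -!mulmxA (mulmxA P^T) P_orth mul1mx.
rewrite mxE; apply: eq_bigr => i _.
by rewrite mul_diag_mx !mxE mulrCA mulrC expr2.
Qed.

End SpectralWalks.

Lemma sum_msupp_power_sums (R : comNzRingType) n k (f : {mpoly R[k]})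
    (c lambda : 'I_n -> R) (w : nat -> R) :
  (forall j, w j = \sum_i c i * lambda i ^+ j) ->
  \sum_(m <- msupp f) f@_m * \prod_(a < k) w (m a) =
  \sum_(t : {ffun 'I_k -> 'I_n}) (\prod_a c (t a)) * f.@[fun a => lambda (t a)].
Proof.
move=> wE.
under eq_bigr => m _ do rewrite (eq_bigr _ (fun a _ => wE (m a))) bigA_distr_bigA big_distrr.
rewrite exchange_big /=; apply: eq_bigr => t _.
rewrite mevalE big_distrr; apply: eq_bigr => m _.
by rewrite big_split /= mulrCA.
Qed.

Theorem proposition1 (R : realFieldType) (n : nat) (e : rel 'I_n)
  (e_sym : ssrbool.symmetric e) (e_irr : irreflexive e) (n_ge1 : (0 < n)%N)
  (lambda : 'I_n -> R) (P : 'M[R]_n) (mu : 'I_n -> R)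
  (lambda_noninc : forall i j : 'I_n, (i <= j)%N -> lambda j <= lambda i)
  (P_orth : P^T *m P = 1%:M)
  (P_eig : forall j : 'I_n, adjmx R e *m col j P = lambda j *: col j P)
  (mu_coord : const_mx 1 = \sum_(j < n) mu j *: col j P)
  (k : nat) (k_ge1 : (0 < k)%N) (f : {mpoly R[k]}) :
  exists gamma : {ffun 'I_k -> 'I_n} -> R,
    (forall t : {ffun 'I_k -> 'I_n},
        (forall a b : 'I_k, (a <= b)%N -> (t a <= t b)%N) -> 0 < gamma t) /\
    (@walk_eval R n k e f) =
      \sum_(t : {ffun 'I_k -> 'I_n} |
              [forall a : 'I_k, forall b : 'I_k, (a <= b)%N ==> (t a <= t b)%N])
        gamma t * (@sympoly_eval R k f (fun a => lambda (t a))) * \prod_(a < k) (mu (t a)) ^+ 2.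
Proof.
pose F (t : {ffun 'I_k -> 'I_n}) := (\prod_a mu (t a) ^+ 2) * f.@[fun a => lambda (t a)].
have walksE j : walks R e j = \sum_i mu i ^+ 2 * lambda i ^+ j.
  exact: sum_entries_mxX_eigen P_orth P_eig mu_coord j.
have [gamma gamma_gt0 sumFE] := sum_ffun_sorted_orbits F.
exists gamma; split=> [t t_sorted|].
  by apply: gamma_gt0; apply/forallP => a; apply/forallP => b; apply/implyP/t_sorted.
rewrite /walk_eval (sum_msupp_power_sums _ walksE) sumFE.
apply: eq_bigr => s _; rewrite -mulrA [_ * \prod_a _]mulrC; congr (_ * _).
rewrite /sympoly_eval big_distrr; apply: eq_bigr => p _ /=; congr (_ * _).
  by rewrite [RHS](reindex_inj (@perm_inj _ p)); apply: eq_bigr => a _; rewrite ffunE.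
by apply: meval_eq => a; rewrite ffunE.
Qed.
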